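(* Let $\mathcal{G}$ be a finite tree and let $(v_0,v_1,\dots,v_N)$ be the unique path from $v_0$ to $v_N$, $N\ge 1$. Then the access times of the begrudgingly backtracking random walk satisfy $$\tilde{\mathtt{t}}(v_0,v_N)=\tilde{\mathtt{t}}(v_0,v_1)+\sum_{n=1}^{N-1}\Bigl(\tilde{\mathtt{t}}(v_{n-1}\to v_n,v_{n+1})-1\Bigr).$$
   Context: Begrudgingly backtracking random walk (BBRW): $x_1$ is uniform on the neighbors of $x_0$; for $n\ge0$, given $x_n=i,x_{n+1}=j$, $x_{n+2}$ is uniform on $\mathcal{N}(j)\setminus\{i\}$ if this set is nonempty, and $x_{n+2}=i$ otherwise. For a node $k$, $T_k=\min\{n\ge0:x_n=k\}$. Access times of BBRW: $\tilde{\mathtt{t}}(i,k)=\mathbb{E}[T_k\mid x_0=i]$ and $\tilde{\mathtt{t}}(i\to j,k)=\mathbb{E}[T_k\mid x_0=i,\ x_1=j]$ for $j$ adjacent to $i$. *)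

From HB Require Import structures.
From mathcomp Require Import all_boot all_order all_algebra.
From mathcomp Require Import boolp classical_sets reals constructive_ereal ereal.
From mathcomp Require Import topology normedtype sequences.
Set Implicit Arguments. Unset Strict Implicit. Unset Printing Implicit Defensive.
Import Order.TTheory GRing.Theory Num.Theory.
Local Open Scope ring_scope.

Section BBRW.
Variables (T : finType) (e : rel T).

Definition simple_graph := irreflexive e /\ symmetric e.
Definition connected_graph := forall x y : T, connect e x y.
(* No cycle x, p_1, ..., p_k, x with k >= 2 (i.e. at least 3 distinct vertices). *)
Definition acyclic_graph := forall (x : T) (p : seq T),
  (2 <= size p)%N -> path e x p -> uniq (x :: p) -> ~~ e (last x p) x.
Definition is_tree := [/\ simple_graph, connected_graph & acyclic_graph].

Definition nbhd (j : T) : {set T} := [set x | e j x].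

Variable R : realType.

(* P(x_1 = j | x_0 = i): uniform on N(i). *)
Definition step1 (i j : T) : R := if e i j then (#|nbhd i|%:R)^-1 else 0.

(* P(x_{n+2} = k | x_n = i, x_{n+1} = j). *)
Definition step2 (i j k : T) : R :=
  let S := nbhd j :\ i in
  if S == finset.set0 then (k == i)%:R
  else if k \in S then (#|S|%:R)^-1 else 0.

Fixpoint wt (s : seq T) : R :=
  match s with
  | a :: ((b :: (c :: _)) as t) => step2 a b c * wt t
  | _ => 1
  end.

(* P(T_k > n | x_0 = i, x_1 = j) = P(x_0,...,x_n all differ from k | ...). *)
Definition tail2 (i j k : T) (n : nat) : R :=
  if n is n'.+1 then
    \sum_(w : n'.-tuple T) wt [:: i, j & tval w] * (all (fun x => x != k) [:: i, j & tval w])%:R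
  else (i != k)%:R.

(* P(T_k > n | x_0 = i). *)
Definition tail1 (i k : T) (n : nat) : R :=
  if n is n'.+1 then
    \sum_(j : T) \sum_(w : n'.-tuple T)
      step1 i j * wt [:: i, j & tval w] * (all (fun x => x != k) [:: i, j & tval w])%:R
  else (i != k)%:R.

(* Access times, E[T_k | ...] = sum_{n >= 0} P(T_k > n), in the extended reals. *)
Definition access (i k : T) : \bar R := (\sum_(0 <= n <oo) (tail1 i k n)%:E)%E.
Definition access2 (i j k : T) : \bar R := (\sum_(0 <= n <oo) (tail2 i j k n)%:E)%E.

End BBRW.

(* On a tree, the walk from [v 0] to [v n.+1] must pass through [v n], and it
   first enters [v n] along the edge [v n.-1 -> v n]: the branch at [v n.-1] away
   from [v n], which contains [v 0], can only be left through that edge.  By the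
   Markov property of the pair (x_m, x_m+1), P(T_{v n.+1} > m) is then the
   convolution of the law of T_{v n} with the survival function of the walk
   restarted along [v n.-1 -> v n].  Summing over m gives
     t(v 0, v n.+1) = t(v 0, v n) + t(v n.-1 -> v n, v n.+1) - 1,
   the -1 because the restarted walk starts one step before the passage; the
   theorem telescopes these identities.  The summation is delicate only when
   t(v 0, v n) is finite, and then P(T_{v n} > K) <= t(v 0, v n) / (K + 1) tends
   to 0, so the passage through [v n] happens almost surely. *)

From HB Require Import structures.
From mathcomp Require Import all_boot all_order all_algebra.
From mathcomp Require Import boolp classical_sets reals constructive_ereal ereal.
From mathcomp Require Import topology normedtype sequences.
From mathcomp Require Import ring lra zify.
Set Implicit Arguments. Unset Strict Implicit. Unset Printing Implicit Defensive.
Import Order.TTheory GRing.Theory Num.Theory.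
Local Open Scope ring_scope.

Section BigTuple.
Variables (R : Type) (idx : R) (op : Monoid.com_law idx) (T : finType).

Lemma big_tuple0 (F : 0.-tuple T -> R) : \big[op/idx]_(w : 0.-tuple T) F w = F [tuple].
Proof. by rewrite (big_pred1 [tuple]) // => w; apply/esym/eqP; exact: tuple0. Qed.

Lemma big_tuple_cons n (F : n.+1.-tuple T -> R) :
  \big[op/idx]_(w : n.+1.-tuple T) F w =
  \big[op/idx]_(d : T) \big[op/idx]_(w : n.-tuple T) F [tuple of d :: w].
Proof.
rewrite pair_big (reindex (fun p : T * n.-tuple T => [tuple of p.1 :: p.2])) //=.
exists (fun t : n.+1.-tuple T => (thead t, [tuple of behead t])).
  by move=> [d w] _ /=; congr pair; apply: val_inj.
by move=> t _; apply: val_inj => /=; rewrite [in RHS](tuple_eta t).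
Qed.

End BigTuple.

Section Kernel.
Variables (T : finType) (e : rel T) (R : realType).
Local Notation step1 := (step1 e R).
Local Notation step2 := (step2 e R).
Local Notation wt := (wt e R).
Local Notation tail1 := (tail1 e R).
Local Notation tail2 := (tail2 e R).

Lemma step1_ge0 i j : 0 <= step1 i j.
Proof. by rewrite /step1; case: ifP => _ //; rewrite invr_ge0 ler0n. Qed.

Lemma step2_ge0 a b d : 0 <= step2 a b d.
Proof.
rewrite /step2; case: ifP => _; first by rewrite ler0n.
by case: ifP => _ //; rewrite invr_ge0 ler0n.
Qed.

Lemma sum_step1 i : nbhd e i != finset.set0 -> \sum_j step1 i j = 1.
Proof.
move=> Ni; rewrite /step1 -big_mkcond /= sumr_const.
have -> : #|e i| = #|nbhd e i| by apply: eq_card => x; rewrite inE.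
by rewrite -[_ *+ _]mulr_natl mulfV // pnatr_eq0 -lt0n card_gt0.
Qed.

Lemma sum_step2 a b : \sum_d step2 a b d = 1.
Proof.
rewrite /step2 /=; case: eqP => [_|/eqP S0].
  by rewrite (bigD1 a) //= eqxx big1 ?addr0 // => d /negbTE ->.
rewrite -big_mkcond /= sumr_const -[_ *+ _]mulr_natl mulfV //.
by rewrite pnatr_eq0 -lt0n card_gt0.
Qed.

Lemma step1_edge i j : step1 i j != 0 -> e i j.
Proof. by rewrite /step1; case: ifP => //; rewrite eqxx. Qed.

Lemma step2_edge a b d : symmetric e -> e a b -> step2 a b d != 0 -> e b d.
Proof.
move=> esym eab; rewrite /step2 /=; case: ifP => _.
  by have [-> _|_] := eqVneq d a; rewrite ?eqxx // esym.
by case: ifP => [|_]; [rewrite !inE => /andP[_ ->] | rewrite eqxx].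
Qed.

Lemma tail2S a b k m :
  tail2 a b k m.+1 = (a != k)%:R * \sum_d step2 a b d * tail2 b d k m.
Proof.
case: m => [|m].
  by rewrite /tail2 big_tuple0 /= -mulr_suml sum_step2 !mul1r andbT -mulnb natrM.
rewrite /tail2 big_tuple_cons mulr_sumr; apply: eq_bigr => d _.
rewrite mulrCA !mulr_sumr; apply: eq_bigr => w _.
have -> : wt [:: a, b & [tuple of d :: w]] = step2 a b d * wt [:: b, d & w] by [].
have -> : all (fun x => x != k) [:: a, b & [tuple of d :: w]] =
  (a != k) && all (fun x => x != k) [:: b, d & w] by [].
by rewrite -mulnb natrM; ring.
Qed.

Lemma tail2_ge0 a b k m : 0 <= tail2 a b k m.
Proof.
elim: m a b => [|m IH] a b; first exact: ler0n.
rewrite tail2S mulr_ge0 ?ler0n // sumr_ge0 // => d _.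
by rewrite mulr_ge0 ?step2_ge0.
Qed.

Lemma tail2S_le a b k m : tail2 a b k m.+1 <= tail2 a b k m.
Proof.
elim: m a b => [|m IH] a b.
  rewrite tail2S (@le_trans _ _ ((a != k)%:R * \sum_d step2 a b d)) //.
    rewrite ler_wpM2l ?ler0n // ler_sum // => d _.
    by rewrite ler_piMr ?step2_ge0 // lern1 leq_b1.
  by rewrite sum_step2 mulr1.
rewrite (tail2S _ _ _ m.+1) (tail2S _ _ _ m) ler_wpM2l ?ler0n // ler_sum // => d _.
by rewrite ler_wpM2l ?step2_ge0.
Qed.

Lemma tail2_from_target d k m : tail2 k d k m = 0.
Proof. by case: m => [|m]; rewrite ?tail2S /= eqxx ?mul0r. Qed.

Lemma tail2S_to_target a k m : tail2 a k k m.+1 = 0.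
Proof. by rewrite tail2S big1 ?mulr0 // => d _; rewrite tail2_from_target mulr0. Qed.

Lemma tail1_mixture i k m : nbhd e i != finset.set0 ->
  tail1 i k m = \sum_j step1 i j * tail2 i j k m.
Proof.
move=> Ni; case: m => [|m]; first by rewrite /= -mulr_suml sum_step1 // mul1r.
by apply: eq_bigr => j _; rewrite mulr_sumr; apply: eq_bigr => w _; rewrite mulrA.
Qed.

Lemma tail1_ge0 i k m : nbhd e i != finset.set0 -> 0 <= tail1 i k m.
Proof.
move=> Ni; rewrite tail1_mixture // sumr_ge0 // => j _.
by rewrite mulr_ge0 ?step1_ge0 ?tail2_ge0.
Qed.

Lemma tail1S_le i k m : nbhd e i != finset.set0 -> tail1 i k m.+1 <= tail1 i k m.
Proof.
move=> Ni; rewrite !tail1_mixture // ler_sum // => j _.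
by rewrite ler_wpM2l ?step1_ge0 ?tail2S_le.
Qed.

End Kernel.

Section PassageConvolution.
Variable R : pzRingType.

(* With [u n = P(T > n)] for a first passage time [T] ([u t - u t.+1] is the
   probability to pass at time [t.+1]) and [g] the survival function of a walk
   restarted one step before the passage, this is the survival function of the
   combined time. *)
Definition passage_conv (u g : nat -> R) (m : nat) : R :=
  u m + \sum_(t < m) (u t - u t.+1) * g (m - t)%N.

Lemma passage_conv0 u g : passage_conv u g 0 = u 0.
Proof. by rewrite /passage_conv big_ord0 addr0. Qed.

Lemma passage_convS u v g m : u 0%N = u 1%N -> (forall n, u n.+1 = v n) ->
  passage_conv u g m.+1 = passage_conv v g m.
Proof.
move=> u01 uv; rewrite /passage_conv big_ord_recl u01 subrr mul0r add0r uv.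
by congr (_ + _); apply: eq_bigr => t _; rewrite /= !uv subSS.
Qed.

Lemma passage_conv_dirac u g m : u 0%N = 1 -> (forall n, u n.+1 = 0) ->
  passage_conv u g m.+1 = g m.+1.
Proof.
move=> u0 uS; rewrite /passage_conv big_ord_recl /= u0 !uS subr0 mul1r add0r.
by rewrite big1 ?addr0 // => t _; rewrite /= !uS subrr mul0r.
Qed.

Lemma passage_conv_sum (I : finType) (w : I -> R) (u : I -> nat -> R) g m :
  passage_conv (fun n => \sum_i w i * u i n) g m =
  \sum_i w i * passage_conv (u i) g m.
Proof.
under [RHS]eq_bigr do rewrite mulrDr mulr_sumr.
rewrite big_split /= exchange_big /=; congr (_ + _); apply: eq_bigr => t _.
by rewrite -sumrB mulr_suml; apply: eq_bigr => i _; rewrite mulrA mulrBr.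
Qed.

End PassageConvolution.

Section FirstPassage.
Variables (T : finType) (e : rel T) (R : realType).
Hypothesis e_sym : symmetric e.
(* The walk can leave the region [C] only by the step [p -> c]. *)
Variables (p c k : T) (C : pred T).
Hypothesis C_neq_k : forall x, C x -> x != k.
Hypothesis C_neq_c : forall x, C x -> x != c.
Hypothesis C_closed : forall x y, C x -> e x y -> y != c -> C y.
Hypothesis C_gate : forall x, C x -> e x c -> x = p.
Local Notation tail2 := (tail2 e R).

Lemma tail2_first_passage a b m : C a -> C b || (b == c) -> e a b ->
  tail2 a b k m = passage_conv (tail2 a b c) (tail2 p c k) m.
Proof.
elim: m a b => [|m IH] a b Ca Cb eab.
  by rewrite passage_conv0 /= (C_neq_k Ca) (C_neq_c Ca).
have [b_c|b_nc] := eqVneq b c.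
  subst b; have a_p := C_gate Ca eab; subst a.
  rewrite passage_conv_dirac // => [|n]; first by rewrite /= (C_neq_c Ca).
  exact: tail2S_to_target.
have {}Cb : C b by move: Cb; rewrite (negbTE b_nc) orbF.
rewrite tail2S (C_neq_k Ca) mul1r.
transitivity (\sum_d step2 e R a b d * passage_conv (tail2 b d c) (tail2 p c k) m).
  apply: eq_bigr => d _.
  have [->|s_ne0] := eqVneq (step2 e R a b d) 0; first by rewrite !mul0r.
  have ebd := step2_edge e_sym eab s_ne0.
  congr (_ * _); apply: IH => //.
  by have [->|d_nc] := eqVneq d c; rewrite ?eqxx ?orbT // (C_closed Cb ebd d_nc).
rewrite -passage_conv_sum; symmetry; apply: passage_convS => [|n].
  by rewrite tail2S -mulr_suml sum_step2 /= (C_neq_c Ca) (C_neq_c Cb) !mul1r.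
by rewrite tail2S (C_neq_c Ca) mul1r.
Qed.

Lemma tail1_first_passage i m : C i -> nbhd e i != finset.set0 ->
  tail1 e R i k m = passage_conv (tail1 e R i c) (tail2 p c k) m.
Proof.
move=> Ci Ni.
transitivity
  (passage_conv (fun n => \sum_j step1 e R i j * tail2 i j c n) (tail2 p c k) m).
  rewrite passage_conv_sum tail1_mixture //; apply: eq_bigr => j _.
  have [->|s_ne0] := eqVneq (step1 e R i j) 0; first by rewrite !mul0r.
  have eij := step1_edge s_ne0.
  congr (_ * _); apply: tail2_first_passage => //.
  by have [->|j_nc] := eqVneq j c; rewrite ?eqxx ?orbT // (C_closed Ci eij j_nc).
by congr passage_conv; apply/funext => n; rewrite tail1_mixture.
Qed.

End FirstPassage.

Lemma bounded_multiples_le0 (R : archiRealFieldType) (a b : R) :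
  (forall K, a * K.+1%:R <= b) -> a <= 0.
Proof.
move=> bnd; rewrite leNgt; apply/negP => a_gt0.
have b_ge0 : 0 <= b by apply: le_trans (bnd 0%N); rewrite mulr1 ltW.
set K := Num.Def.archi_bound (b / a).
have : b / a < K.+1%:R.
  by apply: lt_le_trans (archi_boundP (divr_ge0 b_ge0 (ltW a_gt0))) _; rewrite ler_nat.
by rewrite ltr_pdivrMr // mulrC ltNge bnd.
Qed.

Lemma partial_lee_nneseries (R : realType) (f : nat -> R) M : (forall n, 0 <= f n) ->
  ((\sum_(m < M) f m)%:E <= \sum_(0 <= m <oo) (f m)%:E)%E.
Proof.
move=> f_ge0; rewrite -sumEFin -(big_mkord xpredT (fun m => (f m)%:E)).
by apply: nneseries_lim_ge => n _ _; rewrite lee_fin.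
Qed.

Lemma nneseries_lee_ub (R : realType) (f : nat -> R) (x : \bar R) :
  (forall n, 0 <= f n) -> (forall M, (\sum_(m < M) f m)%:E <= x)%E ->
  (\sum_(0 <= m <oo) (f m)%:E <= x)%E.
Proof.
move=> f_ge0 ub; apply: lime_le.
  by apply: is_cvg_nneseries => n _ _; rewrite lee_fin.
by apply: nearW => M; rewrite big_mkord sumEFin.
Qed.

Lemma nneseriesEFin_ge0 (R : realType) (f : nat -> R) : (forall n, 0 <= f n) ->
  (0 <= \sum_(0 <= m <oo) (f m)%:E)%E.
Proof. by move=> f_ge0; apply: nneseries_ge0 => n _ _; rewrite lee_fin. Qed.

Section PassageSeries.
Variables (R : realType) (u g : nat -> R).
Hypothesis u0 : u 0%N = 1.
Hypothesis u_ge0 : forall n, 0 <= u n.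
Hypothesis uS_le : forall n, u n.+1 <= u n.
Hypothesis g_ge0 : forall n, 0 <= g n.

Let W m := \sum_(t < m) (u t - u t.+1) * g (m - t)%N.
Let G n := \sum_(j < n) g j.+1.

Let u_le : {homo u : a b / (a <= b)%N >-> b <= a}.
Proof. exact/nonincreasing_seqP. Qed.

Let G_le : {homo G : a b / (a <= b)%N >-> a <= b}.
Proof. by apply/nondecreasing_seqP => n; rewrite /G big_ord_recr lerDl. Qed.

Let G_ge0 n : 0 <= G n. Proof. exact: sumr_ge0. Qed.

Let W_ge0 m : 0 <= W m.
Proof. by apply: sumr_ge0 => t _; rewrite mulr_ge0 ?subr_ge0. Qed.

Let sum_increments M : \sum_(t < M) (u t - u t.+1) = 1 - u M.
Proof.
elim: M => [|M IH]; first by rewrite big_ord0 u0 subrr.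
by rewrite big_ord_recr /= IH addrA subrK.
Qed.

Let sum_W M : \sum_(m < M) W m = \sum_(t < M) (u t - u t.+1) * G (M - t.+1)%N.
Proof.
elim: M => [|M IH]; first by rewrite !big_ord0.
rewrite big_ord_recr /= IH [RHS]big_ord_recr /= subnn /G big_ord0 mulr0 addr0.
rewrite /W -big_split /=; apply: eq_bigr => t _.
by rewrite -mulrDr subSS -(subnSK (ltn_ord t)) /G big_ord_recr.
Qed.

Let sum_W_le M : \sum_(m < M) W m <= G M.
Proof.
rewrite sum_W (@le_trans _ _ (\sum_(t < M) (u t - u t.+1) * G M)) //.
  by apply: ler_sum => t _; rewrite ler_wpM2l ?subr_ge0 // G_le // leq_subr.
by rewrite -mulr_suml sum_increments ler_piMl // gerDl oppr_le0.
Qed.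

Let sum_W_ge K L : (1 - u K) * G L <= \sum_(m < K + L.+1) W m.
Proof.
rewrite sum_W big_split_ord /= -sum_increments mulr_suml -[X in X <= _]addr0.
apply: lerD.
  by apply: ler_sum => t _; rewrite ler_wpM2l ?subr_ge0 // G_le //; have := ltn_ord t; lia.
by apply: sumr_ge0 => t _; rewrite mulr_ge0 ?subr_ge0.
Qed.

Let survival_bound K : K.+1%:R * u K <= \sum_(m < K.+1) u m.
Proof.
have -> : K.+1%:R * u K = \sum_(t < K.+1) u K by rewrite sumr_const card_ord mulr_natl.
by apply: ler_sum => t _; apply: u_le; have := ltn_ord t; lia.
Qed.

Let nneseries_W_le : (\sum_(0 <= m <oo) (W m)%:E <= \sum_(0 <= j <oo) (g j.+1)%:E)%E.
Proof.
apply: nneseries_lee_ub => // M.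
apply: le_trans (partial_lee_nneseries M (fun j => g_ge0 j.+1)).
by rewrite lee_fin sum_W_le.
Qed.

(* As [u] is nonincreasing, [u K <= s / K.+1]: the lower bound
   [(1 - u K) * G L] on partial sums of [W] tends to [G L]. *)
Let nneseries_W_ge s : (\sum_(0 <= m <oo) (u m)%:E = s%:E)%E ->
  (\sum_(0 <= j <oo) (g j.+1)%:E <= \sum_(0 <= m <oo) (W m)%:E)%E.
Proof.
move=> sum_u; apply: nneseries_lee_ub => // L.
case sum_W_eq : (\sum_(0 <= m <oo) (W m)%:E)%E => [x| |]; last 2 first.
- exact: leey.
- by have := nneseriesEFin_ge0 W_ge0; rewrite sum_W_eq.
have W_le_x M : \sum_(m < M) W m <= x.
  by rewrite -lee_fin -sum_W_eq; exact: partial_lee_nneseries.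
have u_le_s M : \sum_(m < M) u m <= s.
  by rewrite -lee_fin -sum_u; exact: partial_lee_nneseries.
rewrite lee_fin -subr_le0; apply: (@bounded_multiples_le0 _ _ (s * G L)) => K.
have gap : G L - x <= u K * G L.
  by move: (le_trans (sum_W_ge K L) (W_le_x _)); rewrite mulrBl mul1r; lra.
rewrite (le_trans (ler_wpM2r (ler0n _ _) gap)) // mulrAC [u K * _]mulrC.
exact: ler_wpM2r (G_ge0 L) _ _ (le_trans (survival_bound K) (u_le_s K.+1)).
Qed.

Lemma nneseries_passage_conv :
  (\sum_(0 <= m <oo) (passage_conv u g m)%:E =
   \sum_(0 <= m <oo) (u m)%:E + \sum_(0 <= j <oo) (g j.+1)%:E)%E.
Proof.
rewrite (eq_eseriesr (fun m _ => EFinD (u m) (W m))).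
rewrite nneseriesD => [|m _ _|m _ _]; rewrite ?lee_fin //.
case sum_u : (\sum_(0 <= m <oo) (u m)%:E)%E (nneseriesEFin_ge0 u_ge0) => [s| |] // _.
  by congr (_ + _)%E; apply/eqP; rewrite eq_le nneseries_W_le (nneseries_W_ge sum_u).
by rewrite !addye // gt_eqF // (lt_le_trans _ (nneseriesEFin_ge0 _)) ?ltNy0.
Qed.

End PassageSeries.

Section Branch.
Variables (T : finType) (e : rel T) (c p : T).

Definition branch : pred T :=
  [pred x | (x != c) && connect [rel y z | [&& e y z, y != c & z != c]] p x].

Lemma branch_neq x : branch x -> x != c.
Proof. by case/andP. Qed.

Lemma branch_root : p != c -> branch p.
Proof. by rewrite /branch /= connect0 andbT. Qed.

Lemma branch_closed x y : branch x -> e x y -> y != c -> branch y.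
Proof.
case/andP => x_nc px exy y_nc; rewrite /branch /= y_nc.
by apply: connect_trans px (connect1 _); rewrite /= exy x_nc y_nc.
Qed.

(* A second edge from the branch into [c] would close a cycle through [c]. *)
Lemma branch_gate x : symmetric e -> acyclic_graph e -> e p c -> p != c ->
  branch x -> e x c -> x = p.
Proof.
move=> e_sym acyc epc pc /andP[_ /connectP[q pq ->]] exc.
apply/eqP; apply: contraT => x_np; move: x_np exc.
case/shortenP: pq => q' pq' uq' _ x_np exc.
have q'_nc : c \notin q'.
  apply/negP => /(nthP c)[j j_lt q'j_c].
  by move/(pathP c)/(_ j j_lt): (pq'); rewrite /= q'j_c eqxx !andbF.
have := acyc c (p :: q'); rewrite /= e_sym epc exc /=.
apply=> //; last by rewrite inE negb_or eq_sym pc q'_nc.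
- by case: q' {pq' uq' q'_nc} x_np exc => //=; rewrite eqxx.
- by apply: sub_path pq' => y z /andP[].
Qed.

End Branch.

Lemma access2_recl (T : finType) (e : rel T) (R : realType) a b k : a != k ->
  access2 e R a b k = (1 + \sum_(0 <= j <oo) (tail2 e R a b k j.+1)%:E)%E.
Proof.
move=> a_nk; have t_ge0 j : (0 <= (tail2 e R a b k j)%:E)%E by rewrite lee_fin tail2_ge0.
rewrite /access2 nneseries_recl // -(nneseries_addn 1) //.
by congr (_ + _)%E; [rewrite /= a_nk | apply: eq_eseriesr => j _; rewrite addn1].
Qed.

Lemma access_first_passage (T : finType) (e : rel T) (R : realType) i p c k :
  is_tree e -> e p c -> e c k -> k != p -> branch e c p i -> nbhd e i != finset.set0 ->
  access e R i k = (access e R i c + (access2 e R p c k - 1%:E))%E.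
Proof.
case=> [[e_irr e_sym] _ acyc] epc eck k_np Ci Ni.
have pc : p != c by apply: contraTneq epc => ->; rewrite e_irr.
have gate := branch_gate e_sym acyc epc pc.
have branch_nk x : branch e c p x -> x != k.
  by move=> Cx; apply: contraNneq k_np => x_k; rewrite -x_k (gate x) // x_k e_sym.
have first_passage m := tail1_first_passage R e_sym branch_nk
  (@branch_neq _ e c p) (@branch_closed _ e c p) gate m Ci Ni.
rewrite /access (eq_eseriesr (fun m _ => congr1 EFin (first_passage m))).
rewrite nneseries_passage_conv => [||n|n|n].
- rewrite (access2_recl e R c (branch_nk p (branch_root e pc))).
  by rewrite [(1 + _)%E]addeC addeK.
- by rewrite /= (branch_neq Ci).
- exact: tail1_ge0.
- exact: tail1S_le.
- exact: tail2_ge0.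
Qed.

Section TreePath.
Variables (T : finType) (e : rel T) (R : realType) (N : nat) (v : nat -> T).
Hypothesis tree : is_tree e.
Hypothesis v_edge : forall n, (n < N)%N -> e (v n) (v n.+1).
Hypothesis v_inj : forall m n, (m <= N)%N -> (n <= N)%N -> v m = v n -> m = n.

Let v_neq m n : (m <= N)%N -> (n <= N)%N -> m != n -> v m != v n.
Proof. by move=> mN nN; apply: contra => /eqP /v_inj ->. Qed.

Lemma path_start_in_branch n : (0 < n < N)%N -> branch e (v n) (v n.-1) (v 0).
Proof.
move=> /andP[n_gt0 nN]; have e_sym : symmetric e by case: tree => [[]].
suff in_branch d : (d <= n.-1)%N -> branch e (v n) (v n.-1) (v (n.-1 - d)).
  by rewrite -(subnn n.-1) in_branch.
elim: d => [|d IH] d_le; first by rewrite subn0 branch_root // v_neq //; lia.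
apply: (branch_closed (IH (ltnW d_le))); last by apply: v_neq; lia.
by rewrite e_sym (_ : (n.-1 - d = (n.-1 - d.+1).+1)%N); [apply: v_edge | ]; lia.
Qed.

Lemma access_path_step n : (0 < n < N)%N ->
  access e R (v 0) (v n.+1) =
  (access e R (v 0) (v n) + (access2 e R (v n.-1) (v n) (v n.+1) - 1%:E))%E.
Proof.
move=> /andP[n_gt0 nN]; apply: (access_first_passage R tree).
- by rewrite -{2}(prednK n_gt0); apply: v_edge; lia.
- exact: v_edge.
- by apply: v_neq; lia.
- by apply: path_start_in_branch; rewrite n_gt0.
- by apply/set0Pn; exists (v 1); rewrite inE v_edge //; lia.
Qed.

End TreePath.

Unset Implicit Arguments.
Close Scope ring_scope.

Theorem lemma4 (R : realType) (T : finType) (e : rel T) (N : nat) (v : nat -> T) :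
  is_tree e ->
  (1 <= N)%N ->
  (forall n, (n < N)%N -> e (v n) (v n.+1)) ->
  (forall m n, (m <= N)%N -> (n <= N)%N -> v m = v n -> m = n) ->
  access e R (v 0%N) (v N) =
    (access e R (v 0%N) (v 1%N) +
     \sum_(1 <= n < N) (access2 e R (v n.-1) (v n) (v n.+1) - 1%:E))%E.
Proof.
move=> tree N_gt0 v_edge v_inj.
suff telescope M : (0 < M <= N)%N -> access e R (v 0%N) (v M) =
    (access e R (v 0%N) (v 1%N) +
     \sum_(1 <= n < M) (access2 e R (v n.-1) (v n) (v n.+1) - 1%:E))%E.
  by apply: telescope; rewrite N_gt0 leqnn.
elim: M => [//|M IH] /andP[_ M_lt].
have [->|M_gt0] := posnP M; first by rewrite big_geq // adde0.
rewrite big_nat_recr //= addeA -IH; last by rewrite M_gt0 ltnW.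
by apply: (access_path_step R tree v_edge v_inj); rewrite M_gt0.
Qed.
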